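(* Let $K\ge2$ and consider a rotation-invariant random point process on the discrete circle with holes $1,\dots,K$ (clockwise), with $\mathbb P(\text{particle at hole }K)>0$. Let $W$ be the smallest index $l\in\{1,\dots,K\}$ such that hole $l$ is occupied, $g(L)=\mathbb P(W=L)$, and $\Delta g(L)=g(L+1)-g(L)$ with $g(K+1)=0$. Then for every $L\in\{1,\dots,K\}$, $$-\Delta g(L)=\mathbb P\big(\text{there is a particle at hole }K\text{ and the clockwise distance from hole }K\text{ to the next occupied hole equals }L\big).$$
   Context: Adjacent holes are at distance 1; if hole $K$ is the only occupied hole, the distance to the next occupied hole is $K$. *)

From mathcomp Require Import all_boot all_order all_algebra.
Set Implicit Arguments. Unset Strict Implicit. Unset Printing Implicit Defensive.
Import Order.TTheory GRing.Theory Num.Theory.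
Local Open Scope ring_scope.

(* Holes 1,...,K of the discrete circle (clockwise) are encoded by the
   0-based indices 0,...,K-1 of 'I_K : hole l <-> index l-1.
   A configuration is the set of occupied indices. Clockwise step = ordS. *)
Definition config (K : nat) := {set 'I_K}.

Definition occ K (c : config K) (j : nat) : bool :=
  [exists i : 'I_K, (val i == j) && (i \in c)].

Definition rot1 K (c : config K) : config K := [set ordS i | i in c].

Definition is_pmf (R : realFieldType) K (P : {ffun config K -> R}) : Prop :=
  (forall c, 0 <= P c) /\ \sum_(c : config K) P c = 1.

Definition rot_invariant (R : realFieldType) K (P : {ffun config K -> R}) : Prop :=
  forall c, P (rot1 c) = P c.

Definition Prob (R : realFieldType) K (P : {ffun config K -> R})
  (E : config K -> bool) : R := \sum_(c : config K | E c) P c.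

Definition W_is K (c : config K) (L : nat) : bool :=
  occ c L.-1 && all (fun l => ~~ occ c l.-1) (iota 1 L.-1).

Definition g (R : realFieldType) K (P : {ffun config K -> R}) (L : nat) : R :=
  if (L == K.+1)%N then 0 else Prob P (fun c => W_is c L).

(* clockwise distance from index i to the next occupied hole equals d:
   1 <= d <= K, index (i+d) mod K is occupied, and indices (i+d') mod K
   for 1 <= d' < d are empty. (If i is the only occupied hole, d = K.) *)
Definition next_dist K (c : config K) (i : nat) (d : nat) : bool :=
  [&& (1 <= d <= K)%N, occ c ((i + d) %% K)
    & all (fun d' => ~~ occ c ((i + d') %% K)) (iota 1 d.-1)].

(* Rotating a configuration one hole clockwise moves the first occupied hole
   from L to L+1 exactly when hole K is empty, so by rotation invariance
   g(L+1) = P(W = L, hole K empty) and -Δg(L) = P(W = L, hole K occupied).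
   Seen from hole K, the next occupied hole is at distance L iff W = L. *)

From mathcomp Require Import all_boot all_order all_algebra.
From mathcomp Require Import zify.
Set Implicit Arguments. Unset Strict Implicit.
Import Order.TTheory GRing.Theory Num.Theory.
Local Open Scope ring_scope.

Lemma modn_predDl d m : (0 < m <= d)%N -> ((d.-1 + m) %% d = m.-1)%N.
Proof.
move=> hm; have -> : (d.-1 + m = d + m.-1)%N by lia.
by rewrite modnDl modn_small //; lia.
Qed.

Lemma occE K (c : config K) (i : 'I_K) : occ c i = (i \in c).
Proof.
apply/existsP/idP => [[j /andP[/eqP/val_inj -> //]] | ci].
by exists i; rewrite eqxx ci.
Qed.

Lemma occ_ge K (c : config K) j : (K <= j)%N -> occ c j = false.
Proof.
move=> hj; apply/existsP => -[i /andP[/eqP hi _]].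
by have := ltn_ord i; rewrite hi; lia.
Qed.

Section Rotation.

Variables (K : nat) (c : config K).

Lemma occ_rot1_ordS (i : 'I_K) : occ (rot1 c) (ordS i) = occ c i.
Proof. by rewrite !occE /rot1 mem_imset //; apply: ordS_inj. Qed.

Lemma occ_rot1_0 : (0 < K)%N -> occ (rot1 c) 0%N = occ c K.-1.
Proof.
move=> hK; have hi : (K.-1 < K)%N by lia.
by rewrite -(occ_rot1_ordS (Ordinal hi)) /= prednK ?modnn.
Qed.

Lemma occ_rot1S j : (j.+1 < K)%N -> occ (rot1 c) j.+1 = occ c j.
Proof.
move=> hj; have hi : (j < K)%N by lia.
by rewrite -(occ_rot1_ordS (Ordinal hi)) /= modn_small.
Qed.

Lemma W_is_rot1 L : (0 < L <= K)%N ->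
  W_is (rot1 c) L.+1 = W_is c L && ~~ occ c K.-1.
Proof.
case: L => [//|L] /andP[_ hLK].
have shift_empty : all (fun l => ~~ occ (rot1 c) l.-1) (iota 2 L)
                 = all (fun l => ~~ occ c l.-1) (iota 1 L).
  rewrite (iotaDl 1) all_map; apply: eq_in_all => -[|l]; rewrite mem_iota // => hl.
  by rewrite /= add0n occ_rot1S //; lia.
rewrite /W_is /= occ_rot1_0 ?shift_empty; last by lia.
case: (ltnP L.+1 K) => hL.
  by rewrite occ_rot1S // andbA andbAC.
have -> : K.-1 = L by lia.
by rewrite occ_ge // andbAC andbN.
Qed.

Lemma next_dist_last L : (0 < L <= K)%N -> next_dist c K.-1 L = W_is c L.
Proof.
move=> hL; rewrite /next_dist /W_is hL /= modn_predDl //; congr (_ && _).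
apply: eq_in_all => j; rewrite mem_iota => hj.
by rewrite modn_predDl //; lia.
Qed.

End Rotation.

Section Probability.

Variables (R : realFieldType) (K : nat) (P : {ffun config K -> R}).

Lemma eq_Prob (E F : config K -> bool) : E =1 F -> Prob P E = Prob P F.
Proof. exact: eq_bigl. Qed.

Lemma ProbID (E F : config K -> bool) :
  Prob P E = Prob P (fun c => E c && F c) + Prob P (fun c => E c && ~~ F c).
Proof. exact: bigID. Qed.

Lemma Prob_rot1 (E : config K -> bool) :
  rot_invariant P -> Prob P E = Prob P (fun c => E (rot1 c)).
Proof.
move=> Prot; rewrite /Prob (reindex_inj (imset_inj (@ordS_inj K))) /=.
by apply: eq_bigr => c _; rewrite Prot.
Qed.

(* Also covers the convention g(K+1) = 0: hole K+1 is never occupied. *)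
Lemma gE L : g P L = Prob P (fun c => W_is c L).
Proof.
rewrite /g; case: eqP => [-> | //].
rewrite /Prob big_pred0 // => c.
by rewrite /W_is occ_ge.
Qed.

End Probability.

Theorem lemma4p3 (R : realFieldType) (K : nat) (P : {ffun config K -> R}) :
  (2 <= K)%N ->
  is_pmf P ->
  rot_invariant P ->
  0 < Prob P (fun c => occ c K.-1) ->
  forall L : nat, (1 <= L <= K)%N ->
    - (g P L.+1 - g P L) =
    Prob P (fun c => occ c K.-1 && next_dist c K.-1 L).
Proof.
move=> _ _ Prot _ L hL.
have gS : g P L.+1 = Prob P (fun c => W_is c L && ~~ occ c K.-1).
  by rewrite gE (Prob_rot1 _ Prot); apply: eq_Prob => c; rewrite W_is_rot1.
rewrite gS gE (ProbID P (fun c => W_is c L) (fun c => occ c K.-1)) opprB addrK.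
by apply: eq_Prob => c; rewrite next_dist_last // andbC.
Qed.
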